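(* Let $f:A\to B$ be a strict morphism in $\mathcal G$ (so $\ker f$ and $\operatorname{coker} f$ lie in $\mathcal G$). Then: (1) if $g:X\to A$ is a strict morphism with $f\circ g=0$, the induced map $\tilde g:X\to\ker f$ is a strict morphism; (2) if $h:B\to Y$ is a strict morphism with $h\circ f=0$, the induced map $\bar h:\operatorname{coker} f\to Y$ is a strict morphism. Consequently $\ker f$ and $\operatorname{coker} f$ are also a kernel and cokernel of $f$ in the category whose objects are those of $\mathcal G$ and whose morphisms are the strict morphisms.
   Context: Let $\Lambda$ be a finite dimensional algebra over a field and $\mathrm{mod}\text-\Lambda$ the category of finitely generated right $\Lambda$-modules. Fix a torsion class $\mathcal G\subseteq\mathrm{mod}\text-\Lambda$, i.e. a class of modules closed under isomorphisms, extensions and quotients. For $B\in\mathcal G$, a subobject of $B$ is a submodule of $B$ that lies in $\mathcal G$. A subobject $A\subseteq B$ is a strict subobject if $A\cap B'\in\mathcal G$ for every subobject $B'$ of $B$. A strict morphism is a module homomorphism $f:A\to B$ with $A,B\in\mathcal G$ such that $\ker f\in\mathcal G$, $\ker f$ is a strict subobject of $A$, and $\operatorname{im} f$ is a strict subobject of $B$. *)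

From HB Require Import structures.
From mathcomp Require Import all_boot all_order all_algebra falgebra.
Set Implicit Arguments.
Unset Strict Implicit.
Unset Printing Implicit Defensive.
Import GRing.Theory.
Local Open Scope ring_scope.

(* A finitely generated right module over a finite dimensional K-algebra L:
   a finite dimensional K-vector space with a right L-action. *)
Record rmod (K : fieldType) (L : falgType K) := RMod {
  rm_sort :> vectType K;
  rm_act : rm_sort -> L -> rm_sort;
  rm_actDl : forall (u v : rm_sort) a, rm_act (u + v) a = rm_act u a + rm_act v a;
  rm_actZl : forall (k : K) (u : rm_sort) a, rm_act (k *: u) a = k *: rm_act u a;
  rm_actDr : forall (u : rm_sort) a b, rm_act u (a + b) = rm_act u a + rm_act u b;
  rm_actZr : forall (k : K) (u : rm_sort) a, rm_act u (k *: a) = k *: rm_act u a;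
  rm_act1 : forall u : rm_sort, rm_act u 1 = u;
  rm_actM : forall (u : rm_sort) a b, rm_act u (a * b) = rm_act (rm_act u a) b
}.

Section Defs.
Variables (K : fieldType) (L : falgType K).
Local Notation rmod := (rmod L).

Definition is_hom (M N : rmod) (f : 'Hom(M, N)) : Prop :=
  forall (u : M) (a : L), f (rm_act u a) = rm_act (f u) a.

Definition is_submod (M : rmod) (U : {vspace M}) : Prop :=
  forall (u : M) (a : L), u \in U -> rm_act u a \in U.

Definition torsion_class (G : rmod -> Prop) : Prop :=
  [/\ (forall (M N : rmod) (f : 'Hom(M, N)), is_hom f ->
         lker f = 0%VS -> limg f = fullv -> G M -> G N),
      (forall (M1 M M2 : rmod) (i : 'Hom(M1, M)) (p : 'Hom(M, M2)),
         is_hom i -> is_hom p -> lker i = 0%VS -> limg p = fullv ->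
         limg i = lker p -> G M1 -> G M2 -> G M) &
      (forall (M N : rmod) (f : 'Hom(M, N)), is_hom f ->
         limg f = fullv -> G M -> G N)].

(* A submodule U of M, regarded as a module, lies in G.  Since G is closed
   under isomorphism, this means: U is the image of an injective module map
   from some module in G. *)
Definition sub_in (G : rmod -> Prop) (M : rmod) (U : {vspace M}) : Prop :=
  is_submod U /\
  exists (N : rmod) (i : 'Hom(N, M)),
    [/\ G N, is_hom i, lker i = 0%VS & limg i = U].

Definition subobject (G : rmod -> Prop) (B : rmod) (U : {vspace B}) : Prop :=
  sub_in G U.

Definition strict_subobject (G : rmod -> Prop) (B : rmod) (U : {vspace B}) : Prop :=
  subobject G U /\
  forall U' : {vspace B}, subobject G U' -> sub_in G (U :&: U')%VS.

Definition strict_morphism (G : rmod -> Prop) (A B : rmod) (f : 'Hom(A, B)) : Prop :=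
  [/\ is_hom f, G A, G B, sub_in G (lker f)
      & strict_subobject G (lker f) /\ strict_subobject G (limg f)].

End Defs.

From HB Require Import structures.
From mathcomp Require Import all_boot all_order all_algebra falgebra.
Set Implicit Arguments.
Unset Strict Implicit.
Unset Printing Implicit Defensive.
Import GRing.Theory.
Local Open Scope ring_scope.

(* If [i \o gt = g] for a
   monomorphism [i], then [gt] has the kernel of [g] and image [i^-1 (im g)];
   if [hb \o p = h] for an epimorphism [p] with kernel in G, then [hb] has the
   image of [h] and kernel [p (ker h)].  Preimages under [i] of submodules in G
   stay in G (they are isomorphic), preimages under [p] stay in G by closure
   under extensions, and images stay in G by closure under quotients; pushing
   an intersection with an arbitrary subobject through [i] or [p] then shows
   that strictness is inherited. *)

Section Submodules.
Variables (K : fieldType) (L : falgType K).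
Local Notation rmod := (rmod L).

Lemma rm_act0l (M : rmod) a : rm_act (0 : M) a = 0.
Proof. by rewrite -(scale0r (0 : M)) rm_actZl !scale0r. Qed.

Lemma limg_zero (aT rT : vectType K) : limg (0 : 'Hom(aT, rT)) = 0%VS.
Proof. by apply/eqP; rewrite -lkerE; apply/subvP => x _; rewrite memv_ker zero_lfunE. Qed.

Lemma lker_comp (M N P : rmod) (f : 'Hom(M, N)) (g : 'Hom(N, P)) :
  lker (g \o f)%VF = (f @^-1: lker g)%VS.
Proof. by apply/vspaceP => x; rewrite -memv_preim !memv_ker comp_lfunE. Qed.

Lemma lpreim_img_mono (M N : rmod) (i : 'Hom(M, N)) (U : {vspace M}) :
  lker i = 0%VS -> (i @^-1: (i @: U))%VS = U.
Proof.
move/eqP/lker0P=> i_inj; apply/vspaceP => x; rewrite -memv_preim.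
by apply/memv_imgP/idP => [[y yU /i_inj ->]|xU] //; exists x.
Qed.

Section SubmoduleAsModule.
Variables (M : rmod) (U : {vspace M}) (hU : is_submod U).

Definition submod_act (u : subvs_of U) (a : L) : subvs_of U :=
  vsproj U (rm_act (vsval u) a).

Lemma submod_actDl (u v : subvs_of U) a :
  submod_act (u + v) a = submod_act u a + submod_act v a.
Proof. by rewrite /submod_act linearD /= rm_actDl linearD. Qed.

Lemma submod_actZl (k : K) (u : subvs_of U) a :
  submod_act (k *: u) a = k *: submod_act u a.
Proof. by rewrite /submod_act linearZ /= rm_actZl linearZ. Qed.

Lemma submod_actDr (u : subvs_of U) a b :
  submod_act u (a + b) = submod_act u a + submod_act u b.
Proof. by rewrite /submod_act rm_actDr linearD. Qed.

Lemma submod_actZr (k : K) (u : subvs_of U) a :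
  submod_act u (k *: a) = k *: submod_act u a.
Proof. by rewrite /submod_act rm_actZr linearZ. Qed.

Lemma submod_act1 (u : subvs_of U) : submod_act u 1 = u.
Proof. by rewrite /submod_act rm_act1 vsvalK. Qed.

Lemma submod_actM (u : subvs_of U) a b :
  submod_act u (a * b) = submod_act (submod_act u a) b.
Proof. by rewrite /submod_act rm_actM vsprojK // hU // subvsP. Qed.

Definition submod : rmod :=
  RMod submod_actDl submod_actZl submod_actDr submod_actZr submod_act1 submod_actM.

Definition submod_incl : 'Hom(submod, M) := linfun (vsval : subvs_of U -> M).

Definition submod_corestr (N : rmod) (k : 'Hom(N, M)) : 'Hom(N, submod) :=
  (linfun (vsproj U : M -> subvs_of U) \o k)%VF.

Lemma submod_inclE x : submod_incl x = vsval x.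
Proof. by rewrite lfunE. Qed.

Lemma submod_corestrE (N : rmod) (k : 'Hom(N, M)) x :
  k x \in U -> vsval (submod_corestr k x) = k x.
Proof. by move=> kxU; rewrite comp_lfunE lfunE /= vsprojK. Qed.

Lemma submod_incl_hom : is_hom submod_incl.
Proof.
by move=> u a; rewrite !submod_inclE /= /submod_act vsprojK // hU // subvsP.
Qed.

Lemma submod_incl_mono : lker submod_incl = 0%VS.
Proof. by apply/eqP/lker0P => x y; rewrite !submod_inclE; apply: subvs_inj. Qed.

Lemma limg_submod_incl : limg submod_incl = U.
Proof.
apply/vspaceP => y; apply/memv_imgP/idP => [[x _ ->]|yU].
  by rewrite submod_inclE subvsP.
by exists (vsproj U y); rewrite ?memvf // submod_inclE vsprojK.
Qed.

Lemma submod_corestr_hom (N : rmod) (k : 'Hom(N, M)) :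
  is_hom k -> (forall x, k x \in U) -> is_hom (submod_corestr k).
Proof.
move=> hk kU u a; apply: subvs_inj; rewrite submod_corestrE //= /submod_act.
by rewrite vsprojK submod_corestrE // ?hk // hU.
Qed.

Lemma submod_corestr_mono (N : rmod) (k : 'Hom(N, M)) :
  lker k = 0%VS -> (forall x, k x \in U) -> lker (submod_corestr k) = 0%VS.
Proof.
move/eqP/lker0P=> k_inj kU; apply/eqP/lker0P => x y e; apply: k_inj.
by rewrite -(submod_corestrE (kU x)) e submod_corestrE.
Qed.

Lemma submod_corestr_epi (N : rmod) (k : 'Hom(N, M)) :
  (U <= limg k)%VS -> (forall x, k x \in U) -> limg (submod_corestr k) = fullv.
Proof.
move=> Uk kU; apply/vspaceP => y; rewrite memvf.
have /memv_imgP[x _ ex] := subvP Uk _ (subvsP y).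
by apply/memv_imgP; exists x; rewrite ?memvf //; apply: subvs_inj; rewrite submod_corestrE.
Qed.

End SubmoduleAsModule.

Section TorsionClass.
Variables (G : rmod -> Prop) (tcG : torsion_class G).

Lemma G_of_epi (M N : rmod) (p : 'Hom(M, N)) :
  is_hom p -> limg p = fullv -> G M -> G N.
Proof. by case: tcG => _ _; apply. Qed.

Lemma sub_in_submod (M : rmod) (U : {vspace M}) (hU : is_submod U) :
  sub_in G U <-> G (submod hU).
Proof.
split=> [[_ [N [i [GN hi ki ii]]]]|GU]; last first.
  split=> //; exists (submod hU), (submod_incl hU).
  by split; rewrite ?submod_incl_mono ?limg_submod_incl //; exact: submod_incl_hom.
case: tcG => iso _ _; have iU x : i x \in U by rewrite -ii memv_img ?memvf.
apply: (iso _ _ (submod_corestr hU i)) GN; first exact: submod_corestr_hom.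
  exact: submod_corestr_mono.
by apply: submod_corestr_epi; rewrite ?ii.
Qed.

Lemma sub_in_fullv (M : rmod) : sub_in G (fullv : {vspace M}) <-> G M.
Proof.
split=> [[_ [N [i [GN hi _ ii]]]]|GM]; first exact: G_of_epi GN.
split=> [u a _|]; first exact: memvf.
exists M, \1%VF; split=> //; last exact: lim1g.
  by move=> u a; rewrite !id_lfunE.
by apply/eqP/lker0P => x y; rewrite !id_lfunE.
Qed.

Lemma sub_in_img (M N : rmod) (h : 'Hom(M, N)) (U : {vspace M}) :
  is_hom h -> sub_in G U -> sub_in G (h @: U)%VS.
Proof.
move=> hh sU; have hU : is_submod U by case: sU.
have hV : is_submod (h @: U)%VS.
  by move=> y a /memv_imgP[u uU ->]; rewrite -hh memv_img // hU.
apply/(sub_in_submod hV).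
have hUV x : (h \o submod_incl hU)%VF x \in (h @: U)%VS.
  by rewrite comp_lfunE submod_inclE memv_img ?subvsP.
apply: (@G_of_epi _ _ (submod_corestr hV (h \o submod_incl hU)%VF)).
- apply: submod_corestr_hom => // x a.
  by rewrite !comp_lfunE submod_incl_hom hh.
- by apply: submod_corestr_epi => //; rewrite limg_comp limg_submod_incl.
- exact/sub_in_submod.
Qed.

Lemma sub_in0 (M N : rmod) : G M -> sub_in G (0 : {vspace N})%VS.
Proof.
move=> GM; rewrite -(limg_zero M N).
apply: sub_in_img; last exact/sub_in_fullv.
by move=> u a; rewrite !zero_lfunE rm_act0l.
Qed.

Lemma sub_in_preim_mono (N M : rmod) (i : 'Hom(N, M)) (V : {vspace M}) :
  is_hom i -> lker i = 0%VS -> (V <= limg i)%VS -> sub_in G V ->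
  sub_in G (i @^-1: V)%VS.
Proof.
move=> hi ki Vi [hV [N0 [j [GN0 hj kj ij]]]].
have iK := lker0_lfunK (introT eqP ki).
have iVK := @limg_lfunVK _ _ _ i.
have jV x : j x \in V by rewrite -ij memv_img ?memvf.
have jI x : j x \in limg i by apply: (subvP Vi).
split=> [x a|]; first by rewrite -!memv_preim hi => ixV; apply: hV.
exists N0, (i^-1 \o j)%VF; split=> //.
- move=> x a; rewrite !comp_lfunE hj.
  by have /memv_imgP[n _ ->] := jI x; rewrite -hi !iK.
- have/lker0P j_inj : lker j == 0%VS by apply/eqP.
  apply/eqP/lker0P => x y; rewrite !comp_lfunE => e; apply: j_inj.
  by rewrite -(iVK _ (jI x)) e iVK.
- apply/vspaceP => y; rewrite -memv_preim.
  apply/memv_imgP/idP => [[x _ ->]|]; first by rewrite comp_lfunE iVK.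
  rewrite -ij => /memv_imgP[x _ e].
  by exists x; rewrite ?memvf // comp_lfunE -e iK.
Qed.

(* [p @^-1: V] is an extension of [V] by [lker p]. *)
Lemma sub_in_preim_epi (M N : rmod) (p : 'Hom(M, N)) (V : {vspace N}) :
  is_hom p -> limg p = fullv -> sub_in G (lker p) -> sub_in G V ->
  sub_in G (p @^-1: V)%VS.
Proof.
move=> hp ip sK sV; have hK : is_submod (lker p) by case: sK.
have hV : is_submod V by case: sV.
have hW : is_submod (p @^-1: V)%VS.
  by move=> x a; rewrite -!memv_preim hp => pxV; apply: hV.
apply/(sub_in_submod hW); case: tcG => _ ext _.
have KW x : submod_incl hK x \in (p @^-1: V)%VS.
  rewrite submod_inclE -memv_preim.
  by have := subvsP x; rewrite memv_ker => /eqP->; apply: mem0v.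
have pWV x : (p \o submod_incl hW)%VF x \in V.
  by rewrite comp_lfunE submod_inclE memv_preim subvsP.
apply: (ext (submod hK) _ (submod hV) (submod_corestr hW (submod_incl hK))
             (submod_corestr hV (p \o submod_incl hW)%VF)).
- by apply: submod_corestr_hom => //; apply: submod_incl_hom.
- apply: submod_corestr_hom => // x a.
  by rewrite !comp_lfunE submod_incl_hom hp.
- by apply: submod_corestr_mono => //; apply: submod_incl_mono.
- apply: submod_corestr_epi => //.
  by rewrite limg_comp limg_submod_incl lpreimK ?ip ?subvf.
- apply/vspaceP => z; transitivity (vsval z \in lker p).
    apply/memv_imgP/idP => [[x _ ->]|zK].
      by rewrite submod_corestrE // submod_inclE subvsP.
    exists (vsproj (lker p) (vsval z)); rewrite ?memvf //.
    by apply: subvs_inj; rewrite submod_corestrE // submod_inclE vsprojK.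
  rewrite !memv_ker -(inj_eq subvs_inj) submod_corestrE //.
  by rewrite comp_lfunE submod_inclE linear0.
- exact/sub_in_submod.
- exact/sub_in_submod.
Qed.

Lemma strict_subobject0 (M N : rmod) :
  G M -> strict_subobject G (0 : {vspace N})%VS.
Proof.
by move=> GM; split=> [|U' _]; rewrite ?cap0v; apply: sub_in0 GM.
Qed.

Lemma strict_subobject_fullv (M : rmod) :
  G M -> strict_subobject G (fullv : {vspace M}).
Proof. by move=> GM; split=> [|U' sU']; rewrite ?capfv //; apply/sub_in_fullv. Qed.

Lemma strict_subobject_preim_mono (N M : rmod) (i : 'Hom(N, M)) (V : {vspace M}) :
  is_hom i -> lker i = 0%VS -> (V <= limg i)%VS -> strict_subobject G V ->
  strict_subobject G (i @^-1: V)%VS.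
Proof.
move=> hi ki Vi [sV strictV]; split; first exact: sub_in_preim_mono.
move=> U' sU'; have -> : (i @^-1: V :&: U' = i @^-1: (V :&: i @: U'))%VS.
  apply/vspaceP => y; rewrite memv_cap -!memv_preim memv_cap.
  by congr (_ && _); rewrite memv_preim lpreim_img_mono.
apply: sub_in_preim_mono => //; first exact: subv_trans (capvSl _ _) Vi.
exact/strictV/sub_in_img.
Qed.

Lemma strict_subobject_img_epi (M N : rmod) (p : 'Hom(M, N)) (V : {vspace M}) :
  is_hom p -> limg p = fullv -> sub_in G (lker p) -> strict_subobject G V ->
  strict_subobject G (p @: V)%VS.
Proof.
move=> hp ip sK [sV strictV]; split; first exact: sub_in_img.
move=> U' sU'.
have -> : (p @: V :&: U' = p @: (V :&: p @^-1: U'))%VS.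
  apply/vspaceP => y; apply/memv_capP/memv_imgP =>
    [[/memv_imgP[b bV ->] pbU]|[b /memv_capP[bV bW] ->]].
    by exists b => //; rewrite memv_cap bV -memv_preim.
  by split; [apply: memv_img | rewrite memv_preim].
exact/sub_in_img/strictV/sub_in_preim_epi.
Qed.

Lemma G_of_mono (N M : rmod) (i : 'Hom(N, M)) :
  is_hom i -> lker i = 0%VS -> sub_in G (limg i) -> G N.
Proof.
move=> hi ki si; apply/sub_in_fullv.
by rewrite -(lpreim_img_mono fullv ki); apply: sub_in_preim_mono.
Qed.

Lemma strict_mono (N M : rmod) (i : 'Hom(N, M)) :
  is_hom i -> lker i = 0%VS -> G N -> G M -> strict_subobject G (limg i) ->
  strict_morphism G i.
Proof.
move=> hi ki GN GM si; split; rewrite // ki; first exact: sub_in0 GM.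
by split; first exact: strict_subobject0 GM.
Qed.

Lemma strict_epi (M N : rmod) (p : 'Hom(M, N)) :
  is_hom p -> limg p = fullv -> G M -> strict_subobject G (lker p) ->
  strict_morphism G p.
Proof.
move=> hp ip GM sK; have GN : G N := G_of_epi hp ip GM.
by split=> //; [case: sK | split; rewrite ?ip //; apply: strict_subobject_fullv].
Qed.

Lemma strict_factor_mono (N M X : rmod) (i : 'Hom(N, M)) (g : 'Hom(X, M))
    (gt : 'Hom(X, N)) :
  is_hom i -> lker i = 0%VS -> G N -> strict_morphism G g ->
  is_hom gt -> (i \o gt = g)%VF -> strict_morphism G gt.
Proof.
move=> hi ki GN [_ GX _ skg [sskg ssig]] hgt defg.
have kgt : lker gt = lker g by rewrite -defg lker_comp ki lpreim0.
have igt : limg gt = (i @^-1: limg g)%VS.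
  by rewrite -defg limg_comp lpreim_img_mono.
have gi : (limg g <= limg i)%VS by rewrite -defg limg_comp limgS ?subvf.
split; rewrite ?kgt ?igt //; split=> //.
exact: strict_subobject_preim_mono.
Qed.

Lemma strict_factor_epi (M N Y : rmod) (p : 'Hom(M, N)) (h : 'Hom(M, Y))
    (hb : 'Hom(N, Y)) :
  is_hom p -> limg p = fullv -> sub_in G (lker p) -> G N ->
  strict_morphism G h -> is_hom hb -> (hb \o p = h)%VF -> strict_morphism G hb.
Proof.
move=> hp ip sK GN [_ _ GY _ [sskh ssih]] hhb defh.
have khb : lker hb = (p @: lker h)%VS by rewrite -defh lker_comp lpreimK ?ip ?subvf.
have ihb : limg hb = limg h by rewrite -defh limg_comp ip.
have sskhb : strict_subobject G (lker hb).
  by rewrite khb; apply: strict_subobject_img_epi.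
by split; rewrite ?ihb //; case: sskhb.
Qed.

End TorsionClass.

Lemma hom_factor_mono (N M X : rmod) (i : 'Hom(N, M)) (g : 'Hom(X, M)) :
  is_hom i -> lker i = 0%VS -> is_hom g -> (limg g <= limg i)%VS ->
  exists gt : 'Hom(X, N), is_hom gt /\ (i \o gt = g)%VF.
Proof.
move=> hi ki hg gi; have/lker0P i_inj : lker i == 0%VS by apply/eqP.
have gI x : g x \in limg i by apply: (subvP gi); rewrite memv_img ?memvf.
have iVK x : i ((i^-1)%VF (g x)) = g x by rewrite limg_lfunVK.
exists (i^-1 \o g)%VF; split; last by apply/lfunP => x; rewrite !comp_lfunE iVK.
by move=> x a; apply: i_inj; rewrite hi !comp_lfunE !iVK hg.
Qed.

Lemma hom_factor_epi (M N Y : rmod) (p : 'Hom(M, N)) (h : 'Hom(M, Y)) :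
  is_hom p -> limg p = fullv -> is_hom h -> (lker p <= lker h)%VS ->
  exists hb : 'Hom(N, Y), is_hom hb /\ (hb \o p = h)%VF.
Proof.
move=> hp ip hh ph.
have pVK v : p ((p^-1)%VF v) = v by rewrite limg_lfunVK ?ip ?memvf.
have hpVp b : h ((p^-1)%VF (p b)) = h b.
  have : (p^-1)%VF (p b) - b \in lker p by rewrite memv_ker linearB /= pVK subrr.
  by move/(subvP ph); rewrite memv_ker linearB /= subr_eq0 => /eqP.
exists (h \o p^-1)%VF; split; last by apply/lfunP => b; rewrite !comp_lfunE hpVp.
by move=> v a; rewrite !comp_lfunE -{1}(pVK v) -hp hpVp hh.
Qed.

End Submodules.

Theorem mainTheorem6 (K : fieldType) (L : falgType K) (G : rmod L -> Prop) :
  torsion_class G ->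
  forall (A B : rmod L) (f : 'Hom(A, B)), strict_morphism G f ->
  (forall (Nk : rmod L) (i : 'Hom(Nk, A)), is_hom i -> lker i = 0%VS ->
     limg i = lker f ->
     strict_morphism G i /\
     forall (X : rmod L) (g : 'Hom(X, A)), strict_morphism G g ->
       (f \o g = 0)%VF ->
       (exists gt : 'Hom(X, Nk), is_hom gt /\ (i \o gt = g)%VF) /\
       (forall gt : 'Hom(X, Nk), is_hom gt -> (i \o gt = g)%VF ->
          strict_morphism G gt)) /\
  (forall (Nc : rmod L) (p : 'Hom(B, Nc)), is_hom p -> limg p = fullv ->
     lker p = limg f ->
     G Nc /\ strict_morphism G p /\
     forall (Y : rmod L) (h : 'Hom(B, Y)), strict_morphism G h ->
       (h \o f = 0)%VF ->
       (exists hb : 'Hom(Nc, Y), is_hom hb /\ (hb \o p = h)%VF) /\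
       (forall hb : 'Hom(Nc, Y), is_hom hb -> (hb \o p = h)%VF ->
          strict_morphism G hb)).
Proof.
move=> tcG A B f [_ GA GB skf [sskf ssif]]; split.
- move=> Nk i hi ki ii.
  have GNk : G Nk by apply: (G_of_mono tcG hi ki); rewrite ii.
  split; first by apply: strict_mono; rewrite ?ii.
  move=> X g sg fg0; have [hg _ _ _ _] := sg.
  have gi : (limg g <= limg i)%VS.
    by rewrite ii lkerE -limg_comp fg0 limg_zero.
  split; first exact: hom_factor_mono.
  by move=> gt hgt; apply: strict_factor_mono.
- move=> Nc p hp ip kp.
  have GNc : G Nc := G_of_epi tcG hp ip GB.
  have sK : sub_in G (lker p) by rewrite kp; case: ssif.
  split=> //; split; first by apply: strict_epi; rewrite ?kp.
  move=> Y h sh hf0; have [hh _ _ _ _] := sh.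
  have ph : (lker p <= lker h)%VS.
    by rewrite kp lkerE -limg_comp hf0 limg_zero.
  split; first exact: hom_factor_epi.
  by move=> hb hhb; apply: strict_factor_epi.
Qed.
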